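(* Let $D$ be a diagram of a knot $K$, let $n=\omega(D)$ be its Wirtinger number, and let $E=\{e_1,\dots,e_n\}$ be a generating set of seeds for $D$ with $n$ elements. For each finite Coxeter group $H$ with $r(H)=n$, fix a robust subset $\mathcal{A}_H\subseteq \mathrm{Gen}(H)$. Consider the following search: for every finite Coxeter group $H$ with $r(H)=n$, every $R\in\mathcal{A}_H$ and every bijection $f:E\to R$, label each seed $e_i$ by $f(e_i)$, extend the labeling along a complete coloring sequence starting from $E$ (at each coloring move with overstrand $o$ and understrands $u_1,u_2$, where $u_2$ is the newly colored strand, set the label of $u_2$ to $g_o g_{u_1} g_o$), and then test whether the resulting labeling of all strands is an $H$-coloring of $D$. Then $D$ exhibits a maximal rank quotient onto a finite Coxeter group, i.e. there is a finite Coxeter group $H$ with $r(H)=\omega(D)$ and a surjective homomorphism $\pi_1(S^3\setminus K)\twoheadrightarrow H$ sending meridians to reflections, if and only if this search finds some $H$, $R$ and $f$ for which the test succeeds. Moreover, the search succeeds for a given $H$ exactly when such a surjection onto that $H$ exists.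
   Context: A Coxeter group $C(\Gamma)$ is given by a finite simple graph $\Gamma$ with edges labeled by integers $>1$. It is generated by elements in bijection with the vertices of $\Gamma$, subject to the relations $s^2=1$ for every generator $s$ and $(st)^k=1$ whenever $s,t$ are joined by an edge of weight $k$. A reflection is any element conjugate to one of these generators. The Coxeter rank $r(G)$ is the minimal cardinality of a generating set of $G$ consisting of reflections. A homomorphism from a knot group to a Coxeter group is called good if it maps meridians to reflections. Diagram notions. The strands of a diagram $D$ are its arcs, i.e. the overstrands between undercrossings. At a crossing $c$ let $o$ be the overstrand and $u_1,u_2$ the two understrands. Given a set $W$ of ''colored'' strands, a coloring move at $c$ is possible when $o,u_1\in W$ and $u_2\notin W$; it replaces $W$ by $W\cup\{u_2\}$. A set of $n$ strands is a generating set of seeds if some sequence of coloring moves starting from it colors every strand of $D$; such a sequence is a complete coloring sequence. The Wirtinger number $\omega(D)$ is the smallest size of a generating set of seeds for $D$. For a group $G$, a $G$-coloring of $D$ by reflections is an assignment $s\mapsto g_s$ of a reflection $g_s\in G$ to each strand $s$ such that at every crossing with overstrand $o$ and understrands $u_1,u_2$ one has $g_o g_{u_1} g_o^{-1}=g_{u_2}$. Since reflections are involutions, this condition does not depend on orientations. Robust sets. $\mathrm{Gen}(H)$ is the set of all generating sets of $H$ that consist of exactly $r(H)$ reflections. Two such sets $\{r_i\}$ and $\{\rho_i\}$ are equivalent if there is $g\in H$ with $\{g^{-1}r_ig\}=\{\rho_i\}$. A subset $\mathcal{A}\subseteq\mathrm{Gen}(H)$ is robust if it contains at least one member of every equivalence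 class. *)

From HB Require Import structures.
From mathcomp Require Import all_boot all_fingroup.
Set Implicit Arguments. Unset Strict Implicit. Unset Printing Implicit Defensive.
Local Open Scope group_scope.

(* A diagram is given by its finite type of strands S and the list of its    *)
(* crossings, each crossing being a triple (o, u1, u2): overstrand o and the *)
(* two understrands u1, u2 (their order carries no meaning).                 *)

Record diagram := Diagram {
  strand : finType;
  crossings : seq (strand * strand * strand)
}.

Definition is_crossing (D : diagram) (o u1 u2 : strand D) : bool :=
  ((o, u1, u2) \in crossings D) || ((o, u2, u1) \in crossings D).

Definition move_ok (D : diagram) (W : {set strand D})
    (m : strand D * strand D * strand D) : bool :=
  let: (o, u1, u2) := m in
  [&& is_crossing o u1 u2, o \in W, u1 \in W & u2 \notin W].

Fixpoint valid_moves (D : diagram) (W : {set strand D})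
    (ms : seq (strand D * strand D * strand D)) : bool :=
  if ms is m :: ms' then move_ok W m && valid_moves (m.2 |: W) ms'
  else true.

Fixpoint colored_after (D : diagram) (W : {set strand D})
    (ms : seq (strand D * strand D * strand D)) : {set strand D} :=
  if ms is m :: ms' then colored_after (m.2 |: W) ms' else W.

Definition complete_coloring_seq (D : diagram) (E : {set strand D})
    (ms : seq (strand D * strand D * strand D)) : Prop :=
  valid_moves E ms /\ colored_after E ms = [set: strand D].

Definition generating_seeds (D : diagram) (E : {set strand D}) : Prop :=
  exists ms, complete_coloring_seq E ms.

Definition wirtinger_number (D : diagram) (n : nat) : Prop :=
  (exists E : {set strand D}, generating_seeds E /\ #|E| = n) /\
  (forall E : {set strand D}, generating_seeds E -> n <= #|E|).

(* Abstract groups (target of the universal property of a presentation).    *)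

Record grp := Grp {
  g_car : Type;
  g_mul : g_car -> g_car -> g_car;
  g_one : g_car;
  g_inv : g_car -> g_car;
  g_assoc : forall x y z, g_mul x (g_mul y z) = g_mul (g_mul x y) z;
  g_mul1 : forall x, g_mul g_one x = x;
  g_mulV : forall x, g_mul (g_inv x) x = g_one
}.

Fixpoint g_pow (G : grp) (x : g_car G) (k : nat) : g_car G :=
  if k is k'.+1 then g_mul x (g_pow x k') else g_one G.

(* Gamma has vertex set cx_V, and cx_m u v = 0 means "no edge", otherwise    *)
(* cx_m u v is the weight of the edge {u,v}. cx_gen v is the generator       *)
(* attached to v, living in a finite group type; the group is               *)
(* H = <<gen(V)>>.                                                           *)

Record coxeter_data := CoxData {
  cx_gT : finGroupType;
  cx_V : finType;
  cx_m : cx_V -> cx_V -> nat;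
  cx_gen : cx_V -> cx_gT
}.
Arguments cx_m : clear implicits.
Arguments cx_gen : clear implicits.

Definition cx_group (C : coxeter_data) : {group cx_gT C} :=
  <<[set cx_gen C v | v : cx_V C]>>%G.

Definition cx_graph_ok (C : coxeter_data) : Prop :=
  (forall u v, cx_m C u v = cx_m C v u) /\
  (forall v, cx_m C v v = 0%N) /\
  (forall u v, cx_m C u v <> 1%N).

(* H = <<gen(V)>> is presented by the generators gen(V) subject to the      *)
(* Coxeter relations s^2 = 1 and (st)^k = 1 for each edge of weight k;       *)
(* i.e. the relations hold in H, and H has the universal property of the     *)
(* presented group C(Gamma) (with respect to all groups).                    *)
Definition is_finite_coxeter (C : coxeter_data) : Prop :=
  cx_graph_ok C /\
  (forall v, cx_gen C v ^+ 2 = 1) /\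
  (forall u v, cx_m C u v != 0%N -> (cx_gen C u * cx_gen C v) ^+ cx_m C u v = 1) /\
  (forall (G : grp) (phi : cx_V C -> g_car G),
     (forall v, g_pow (phi v) 2 = g_one G) ->
     (forall u v, cx_m C u v != 0%N ->
        g_pow (g_mul (phi u) (phi v)) (cx_m C u v) = g_one G) ->
     exists psi : cx_gT C -> g_car G,
       (forall v, psi (cx_gen C v) = phi v) /\
       {in cx_group C &, forall x y, psi (x * y) = g_mul (psi x) (psi y)}).

Definition reflections (C : coxeter_data) : {set cx_gT C} :=
  [set cx_gen C v ^ h | v in [set: cx_V C], h in cx_group C].

Definition coxeter_rank (C : coxeter_data) : nat :=
  \big[minn/#|reflections C|]_(X : {set cx_gT C} |
       (X \subset reflections C) && (<<X>> == cx_group C :> {set _})) #|X|.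

Definition Gen (C : coxeter_data) : {set {set cx_gT C}} :=
  [set X : {set cx_gT C} | [&& X \subset reflections C,
                               <<X>> == cx_group C :> {set _} &
                               #|X| == coxeter_rank C]].

Definition robust (C : coxeter_data) (A : {set {set cx_gT C}}) : Prop :=
  A \subset Gen C /\
  forall X, X \in Gen C -> exists2 g, g \in cx_group C & X :^ g \in A.

Definition is_coloring (D : diagram) (C : coxeter_data)
    (c : strand D -> cx_gT C) : Prop :=
  (forall s, c s \in reflections C) /\
  (forall o u1 u2, (o, u1, u2) \in crossings D ->
     c o * c u1 * (c o)^-1 = c u2).

(* A good surjective homomorphism from the knot group onto H, through the   *)
(* Wirtinger presentation of the knot group associated with D (generators =  *)
(* strands = meridians): an assignment of reflections to the strands          *)
(* satisfying the Wirtinger relations, whose image generates H.               *)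
Definition good_surjection (D : diagram) (C : coxeter_data) : Prop :=
  exists c : strand D -> cx_gT C,
    is_coloring c /\ <<c @: [set: strand D]>> = cx_group C :> {set _}.

Fixpoint extend_labeling (D : diagram) (gT : finGroupType)
    (lab : strand D -> gT) (ms : seq (strand D * strand D * strand D))
    : strand D -> gT :=
  if ms is m :: ms' then
    let: (o, u1, u2) := m in
    extend_labeling (fun s => if s == u2 then lab o * lab u1 * lab o else lab s) ms'
  else lab.

Definition search_succeeds (D : diagram) (E : {set strand D})
    (ms : seq (strand D * strand D * strand D)) (C : coxeter_data)
    (A : {set {set cx_gT C}}) : Prop :=
  exists2 R, R \in A &
    exists f : strand D -> cx_gT C,
      [/\ {in E &, injective f}, f @: E = R &
          is_coloring (extend_labeling f ms)].

(** A move at a crossing [(o, u1, u2)] forces [c u2 = c o * c u1 * c o] for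
    every coloring [c] by reflections, as reflections are involutions.  Hence
    a coloring is determined by its seed labels, and these generate the same
    subgroup as all of its labels.  For a good surjection onto [H] the
    [#|E| = r(H)] seed labels thus generate [H], so they are distinct and form
    an element of [Gen(H)]; robustness conjugates it into [A_H], and
    conjugating the whole coloring by the same element shows that the search
    finds it.  Conversely, the seed labels of a successful search already
    generate [H]. *)

From mathcomp Require Import all_boot all_fingroup.
Set Implicit Arguments. Unset Strict Implicit. Unset Printing Implicit Defensive.
Local Open Scope group_scope.

Definition crossing_rel (D : diagram) (gT : finGroupType)
    (c : strand D -> gT) : Prop :=
  forall o u1 u2, is_crossing o u1 u2 -> c u2 = c o * c u1 * c o.

Section ExtendLabeling.
Variables (D : diagram) (gT : finGroupType).
Implicit Types (W : {set strand D}) (ms : seq (strand D * strand D * strand D))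
  (lab c : strand D -> gT).

Lemma extend_labeling_seed W ms lab s :
  valid_moves W ms -> s \in W -> extend_labeling lab ms s = lab s.
Proof.
elim: ms W lab => [|[[o u1] u2] ms IH] W lab //= /andP[/and4P[_ _ _ u2W] vms] sW.
rewrite (IH _ _ vms); last by rewrite inE sW orbT.
by case: eqP => // sU2; rewrite -sU2 sW in u2W.
Qed.

Lemma extend_labeling_rel W ms lab c :
  crossing_rel c -> valid_moves W ms -> {in W, lab =1 c} ->
  {in colored_after W ms, extend_labeling lab ms =1 c}.
Proof.
move=> relc; elim: ms W lab => [|[[o u1] u2] ms IH] W lab //=.
move=> /andP[/and4P[cr oW u1W _] vms] labc; apply: IH => // s.
rewrite !inE; case: eqP => [-> _|_ /= sW]; last exact: labc.
by rewrite !labc // (relc _ _ _ cr).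
Qed.

Lemma colored_after_subG W ms c (G : {group gT}) :
  crossing_rel c -> valid_moves W ms -> c @: W \subset G ->
  c @: colored_after W ms \subset G.
Proof.
move=> relc; elim: ms W => [|[[o u1] u2] ms IH] W //= /andP[/and4P[cr oW u1W _] vms].
move=> cWG; apply: IH => //; apply/subsetP => _ /imsetP[s + ->].
have inG t : t \in W -> c t \in G by move=> tW; apply: (subsetP cWG); apply: imset_f.
rewrite !inE => /orP[/eqP->|]; last exact: inG.
by rewrite (relc _ _ _ cr) !groupM ?inG.
Qed.

Lemma seeds_generate E ms c :
  complete_coloring_seq E ms -> crossing_rel c ->
  <<c @: E>> = <<c @: [set: strand D]>>.
Proof.
move=> [vms allc] relc; apply/eqP; rewrite eqEsubset genS ?imsetS ?subsetT //=.
by rewrite gen_subG -allc colored_after_subG ?subset_gen.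
Qed.

End ExtendLabeling.

Section Reflections.
Variable C : coxeter_data.

Lemma reflections_sub_group : reflections C \subset cx_group C.
Proof.
apply/subsetP => _ /imset2P[v h _ hH ->].
by rewrite groupJ // mem_gen // imset_f.
Qed.

Lemma reflectionsJ x g :
  x \in reflections C -> g \in cx_group C -> x ^ g \in reflections C.
Proof.
by case/imset2P => v h vV hH -> gH; rewrite -conjgM; apply: imset2_f; rewrite ?groupM.
Qed.

Lemma is_coloring_eq (D : diagram) (c c' : strand D -> cx_gT C) :
  c =1 c' -> is_coloring c -> is_coloring c'.
Proof. by move=> cc' [refl rel]; split=> [s|o u1 u2 /rel]; rewrite -!cc'. Qed.

Lemma is_coloringJ (D : diagram) (c : strand D -> cx_gT C) g :
  g \in cx_group C -> is_coloring c -> is_coloring (fun s => c s ^ g).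
Proof.
move=> gH [refl rel]; split=> [s|o u1 u2 /rel <-]; first exact: reflectionsJ.
by rewrite -conjVg -!conjMg.
Qed.

Lemma coxeter_rank_min (X : {set cx_gT C}) :
  X \subset reflections C -> <<X>> = cx_group C :> {set _} ->
  coxeter_rank C <= #|X|.
Proof.
move=> Xrefl Xgen.
have PX : (X \subset reflections C) && (<<X>> == cx_group C :> {set _}).
  by rewrite Xrefl Xgen eqxx.
rewrite /coxeter_rank; move: (mem_index_enum X); rewrite /index_enum.
elim: (Finite.enum _) => [//|Y r IH]; rewrite inE big_cons => /orP[/eqP<-|Xr].
  by rewrite PX geq_minl.
by case: ifP => _; rewrite ?geq_min IH ?orbT.
Qed.

Lemma mem_Gen_imset (T : finType) (f : T -> cx_gT C) (S : {set T}) :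
  f @: S \subset reflections C -> <<f @: S>> = cx_group C :> {set _} ->
  #|S| <= coxeter_rank C -> f @: S \in Gen C /\ {in S &, injective f}.
Proof.
move=> Srefl Sgen Srank.
have cardfS : #|f @: S| = #|S|.
  by apply/eqP; rewrite eqn_leq leq_imset_card (leq_trans Srank) ?coxeter_rank_min.
split; last by apply/imset_injP; rewrite cardfS.
by rewrite inE Srefl Sgen eqxx eqn_leq coxeter_rank_min // cardfS Srank.
Qed.

Hypothesis gen_invol : forall v, cx_gen C v ^+ 2 = 1.

Lemma reflection_invg x : x \in reflections C -> x^-1 = x.
Proof.
case/imset2P => v h _ _ ->; apply/eqP.
by rewrite eq_invg_mul -conjMg -expg2 gen_invol conj1g.
Qed.

Lemma is_coloring_crossing_rel (D : diagram) (c : strand D -> cx_gT C) :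
  is_coloring c -> crossing_rel c.
Proof.
move=> [refl rel] o u1 u2; have co_inv := reflection_invg (refl o).
have co_sq : c o * c o = 1 by rewrite -{1}co_inv mulVg.
case/orP=> [/rel <-|/rel <-]; first by rewrite co_inv.
by rewrite co_inv !mulgA co_sq mul1g -mulgA co_sq mulg1.
Qed.

End Reflections.

Section Search.
Variables (D : diagram) (E : {set strand D})
  (ms : seq (strand D * strand D * strand D)) (C : coxeter_data).
Hypothesis complete_ms : complete_coloring_seq E ms.

Lemma search_succeeds_good_surjection (A : {set {set cx_gT C}}) :
  A \subset Gen C -> search_succeeds E ms A -> good_surjection D C.
Proof.
move=> AGen [R RA [f [_ fER col]]]; exists (extend_labeling f ms); split=> //.
have := subsetP AGen R RA; rewrite inE => /and3P[_ /eqP Rgen _].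
apply/eqP; rewrite eqEsubset gen_subG; apply/andP; split.
  apply/subsetP => _ /imsetP[s _ ->].
  by rewrite (subsetP (reflections_sub_group C)) //; case: col.
rewrite -Rgen genS // -fER; apply/subsetP => _ /imsetP[s sE ->].
by rewrite -(extend_labeling_seed f complete_ms.1 sE) imset_f.
Qed.

Lemma good_surjection_search_succeeds (A : {set {set cx_gT C}}) :
  is_finite_coxeter C -> #|E| = coxeter_rank C -> robust A ->
  good_surjection D C -> search_succeeds E ms A.
Proof.
move=> [_ [gen_invol _]] cardE [_ robA] [c [col cgen]].
have relc := is_coloring_crossing_rel gen_invol col.
have Erefl : c @: E \subset reflections C.
  by apply/subsetP => _ /imsetP[s _ ->]; case: col.
have Egen : <<c @: E>> = cx_group C :> {set _} by rewrite (seeds_generate complete_ms).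
have [EGen cinj] := mem_Gen_imset Erefl Egen (eq_leq cardE).
have [g gH EgA] := robA _ EGen.
exists ((c @: E) :^ g) => //; exists (fun s => c s ^ g); split.
- by move=> s t sE tE /conjg_inj; apply: cinj.
- by rewrite /conjugate -imset_comp.
- apply: (@is_coloring_eq C D (fun s => c s ^ g)); last exact: is_coloringJ.
  have relcg : crossing_rel (fun s => c s ^ g).
    by move=> o u1 u2 cr; rewrite (relc _ _ _ cr) !conjMg.
  move=> s; apply/esym; apply: (extend_labeling_rel relcg complete_ms.1) => //.
  by rewrite complete_ms.2 inE.
Qed.

End Search.

Theorem mainTheorem1 (D : diagram) (n : nat) (E : {set strand D})
    (ms : seq (strand D * strand D * strand D))
    (A : forall C : coxeter_data, {set {set cx_gT C}}) :
  wirtinger_number D n ->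
  #|E| = n ->
  complete_coloring_seq E ms ->
  (forall C, is_finite_coxeter C -> coxeter_rank C = n -> robust (A C)) ->
  ((exists C, [/\ is_finite_coxeter C, coxeter_rank C = n & good_surjection D C])
     <->
   (exists C, [/\ is_finite_coxeter C, coxeter_rank C = n &
                  search_succeeds E ms (A C)]))
  /\
  (forall C, is_finite_coxeter C -> coxeter_rank C = n ->
     (search_succeeds E ms (A C) <-> good_surjection D C)).
Proof.
move=> _ cardE complete_ms robA.
have search_iff C : is_finite_coxeter C -> coxeter_rank C = n ->
    search_succeeds E ms (A C) <-> good_surjection D C.
  move=> coxC rankC; have robAC := robA C coxC rankC; split.
  - exact: (search_succeeds_good_surjection complete_ms robAC.1).
  - by apply: good_surjection_search_succeeds; rewrite ?cardE.
split=> //; split=> -[C [coxC rankC H]]; exists C; split=> //; exact/(search_iff C).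
Qed.
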